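(* Let $G$ be an oriented graph on $[n]$ with $|\mathcal{P}(G)|\ge 2$. Then there exist $\sigma,\rho\in\mathcal{P}(G)$ such that \[d_\ell(\sigma,\rho)=\max_{1\le i\le n}\{\,n-|R(i)|-|R^{-1}(i)|-1\,\}.\]
   Context: Write a permutation $\sigma\in S_n$ as $\sigma=\sigma_1\cdots\sigma_n$. A permutation $\sigma$ satisfies an oriented graph $G=([n],E)$ if $\sigma_u>\sigma_v$ for every oriented edge $u\to v\in E$; $\mathcal{P}(G)$ is the set of permutations satisfying $G$. Write $u\rightsquigarrow v$ if there is an oriented path from $u$ to $v$ in $G$. For a vertex $v$, $R(v)=\{u\in[n]\setminus\{v\}: v\rightsquigarrow u\}$ and $R^{-1}(v)=\{u\in[n]\setminus\{v\}: u\rightsquigarrow v\}$. The $\ell_\infty$-metric is $d_\ell(\sigma,\rho)=\max_{1\le i\le n}|\sigma_i-\rho_i|$. *)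

From mathcomp Require Import all_boot all_order all_fingroup.
Set Implicit Arguments. Unset Strict Implicit. Unset Printing Implicit Defensive.

(* Vertices [n] are encoded as 'I_n (vertex i+1 <-> ordinal i); a permutation
   sigma in S_n is a 'S_n, with sigma_i encoded by (sigma i : nat) (values
   shifted by -1, which does not affect comparisons or differences). *)

Definition oriented_graph (n : nat) (e : rel 'I_n) : Prop :=
  (forall u, ~~ e u u) /\ (forall u v, e u v -> ~~ e v u).

Definition satisfying_perms (n : nat) (e : rel 'I_n) : {set 'S_n} :=
  [set s : 'S_n | [forall u, forall v, e u v ==> (s v < s u)]].

Definition reach (n : nat) (e : rel 'I_n) (v : 'I_n) : {set 'I_n} :=
  [set u | (u != v) && connect e v u].
Definition reach_inv (n : nat) (e : rel 'I_n) (v : 'I_n) : {set 'I_n} :=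
  [set u | (u != v) && connect e u v].

Definition d_ell (n : nat) (s r : 'S_n) : nat :=
  \max_(i : 'I_n) maxn (s i - r i) (r i - s i).

From mathcomp Require Import all_boot all_order all_fingroup.
From mathcomp Require Import zify.

(* In any s in P(G), the vertices of R(i) lie below i and those of R^{-1}(i)
   above it, so |R(i)| <= s_i <= n - 1 - |R^{-1}(i)|; hence d(s, r) never
   exceeds the maximum.  Conversely, fix one s in P(G) and a vertex i.
   Re-sorting the vertices first by "not reachable from i", then by s, gives
   an element of P(G) with value |R(i)| at i; re-sorting first by "reaches i",
   then by s, gives one with value n - 1 - |R^{-1}(i)| at i.  For i attaining
   the maximum these two are at the required distance. *)

Lemma card_ord_ltn {n k} : k <= n -> #|[set j : 'I_n | j < k]| = k.
Proof.
move=> le_kn; have -> : [set j : 'I_n | j < k] = widen_ord le_kn @: 'I_k.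
  apply/setP => j; rewrite inE; apply/idP/imsetP => [lt_jk | [x _ ->]].
    by exists (Ordinal lt_jk) => //; apply: val_inj.
  exact: (ltn_ord x).
by rewrite card_imset ?card_ord // => x y /(congr1 val) /= /val_inj.
Qed.

Section Rank.
Context {n : nat} (f : 'I_n -> nat).

Definition rank (u : 'I_n) : nat := #|[set w | f w < f u]|.

Lemma rank_lt u : rank u < n.
Proof.
rewrite /rank -[X in _ < X]card_ord -cardsT; apply: proper_card.
by apply/properP; split; [exact: subsetT | exists u; rewrite !inE ?ltnn].
Qed.

Lemma ltn_rank u v : f u < f v -> rank u < rank v.
Proof.
move=> lt_uv; apply: proper_card; apply/properP; split.
  by apply/subsetP => w; rewrite !inE => /ltn_trans; apply.
by exists u; rewrite !inE ?ltnn.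
Qed.

Definition rank_ord u : 'I_n := Ordinal (rank_lt u).

Hypothesis f_inj : injective f.

Lemma rank_ord_inj : injective rank_ord.
Proof.
move=> u v /(congr1 val) /= eq_rank.
case: (ltngtP (f u) (f v)) => [/ltn_rank | /ltn_rank | /f_inj //];
  by rewrite eq_rank ltnn.
Qed.

Definition rank_perm : 'S_n := perm rank_ord_inj.

Lemma rank_permE u : rank_perm u = rank u :> nat.
Proof. by rewrite permE. Qed.

End Rank.

Arguments rank_perm {n f}.

Lemma rank_perm_val n (s : 'S_n) u : rank (fun w => s w : nat) u = s u.
Proof.
rewrite -[RHS](card_ord_ltn (ltnW (ltn_ord (s u)))) -(card_preimset _ (@perm_inj _ s)).
by apply: eq_card => w; rewrite !inE.
Qed.

Section LinearExtensions.
Context {n : nat} {e : rel 'I_n}.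

Lemma satisfying_permP {s : 'S_n} :
  reflect (forall u v, e u v -> s v < s u) (s \in satisfying_perms e).
Proof.
rewrite inE; apply: (iffP forallP) => [H u v | H u].
  by move/forallP: (H u) => /(_ v) /implyP.
by apply/forallP => v; apply/implyP/H.
Qed.

Lemma card_compl_reach_inv i :
  #|~: (i |: reach_inv e i)| = n - #|reach_inv e i| - 1.
Proof.
have := cardsC (i |: reach_inv e i).
rewrite cardsU1 card_ord inE eqxx /=.
by set a := #|~: _|; set b := #|reach_inv e i|; lia.
Qed.

Context {s : 'S_n} (i : 'I_n) (sP : s \in satisfying_perms e).

Lemma connect_satisfying_leq {x y} : connect e x y -> s y <= s x.
Proof.
case/connectP => p + -> {y}; elim: p x => [|z p IHp] x //= /andP [e_xz pz].
exact: leq_trans (IHp _ pz) (ltnW (satisfying_permP sP _ _ e_xz)).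
Qed.

Lemma reach_sub_perm_lt : reach e i \subset [set w | s w < s i].
Proof.
apply/subsetP => w; rewrite !inE => /andP [ne_wi c_iw].
rewrite ltn_neqAle connect_satisfying_leq // andbT.
by apply: contra ne_wi => /eqP /val_inj /perm_inj ->.
Qed.

Lemma perm_lt_sub_compl_reach_inv :
  [set w | s w < s i] \subset ~: (i |: reach_inv e i).
Proof.
apply/subsetP => w; rewrite !inE negb_or => lt_wi.
have -> /= : w != i by apply: contraTneq lt_wi => ->; rewrite ltnn.
by apply: contraTN lt_wi => /connect_satisfying_leq; rewrite leqNgt.
Qed.

Lemma card_reach_leq_perm : #|reach e i| <= s i.
Proof. by rewrite -rank_perm_val; apply/subset_leq_card/reach_sub_perm_lt. Qed.

Lemma perm_leq_card_reach_inv : s i <= n - #|reach_inv e i| - 1.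
Proof.
rewrite -rank_perm_val -card_compl_reach_inv.
exact/subset_leq_card/perm_lt_sub_compl_reach_inv.
Qed.

End LinearExtensions.

Lemma d_ell_leq_max n (e : rel 'I_n) (s r : 'S_n) :
  s \in satisfying_perms e -> r \in satisfying_perms e ->
  d_ell s r <= \max_(i : 'I_n) (n - #|reach e i| - #|reach_inv e i| - 1).
Proof.
move=> sP rP; apply/bigmax_leqP => i _; apply: leq_trans (leq_bigmax i).
have -> : n - #|reach e i| - #|reach_inv e i| - 1 =
          n - #|reach_inv e i| - 1 - #|reach e i|.
  by rewrite -!subnDA addnCA [1 + _]addnC.
by rewrite geq_max !leq_sub ?perm_leq_card_reach_inv ?card_reach_leq_perm.
Qed.

Section Key.
Context {n : nat} (s : 'S_n).

Definition key (b : pred 'I_n) (w : 'I_n) : nat := b w * n + s w.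

Lemma ltn_key b u v :
  (key b u < key b v) = (b u < b v) || (b u == b v) && (s u < s v).
Proof.
rewrite /key; have := ltn_ord (s u); have := ltn_ord (s v).
by case: (b u) (b v) => [] [] /=; lia.
Qed.

Lemma key_inj b : injective (key b).
Proof.
rewrite /key => u v eq_key; apply/(@perm_inj _ s)/val_inj => /=.
move: (ltn_ord (s u)) (ltn_ord (s v)).
by case: (b u) (b v) eq_key => [] [] /=; lia.
Qed.

End Key.

Definition perm_min_at {n} (e : rel 'I_n) (s : 'S_n) (i : 'I_n) : 'S_n :=
  rank_perm (key_inj s (fun w => ~~ connect e i w)).

Definition perm_max_at {n} (e : rel 'I_n) (s : 'S_n) (i : 'I_n) : 'S_n :=
  rank_perm (key_inj s (connect e ^~ i)).

Section ExtremalExtensions.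
Context {n : nat} {e : rel 'I_n} {s : 'S_n} (sP : s \in satisfying_perms e).

Lemma key_perm_satisfying (b : pred 'I_n) :
  (forall u v, e u v -> b v -> b u) -> rank_perm (key_inj s b) \in satisfying_perms e.
Proof.
move=> b_closed; apply/satisfying_permP => u v e_uv.
rewrite !rank_permE; apply: ltn_rank; rewrite ltn_key.
have := satisfying_permP sP _ _ e_uv; have := b_closed _ _ e_uv.
by case: (b u) (b v) => [] [] /= => [_ ->| _ _ | /(_ isT) | _ ->]; rewrite ?orbT.
Qed.

Context (i : 'I_n).

Lemma perm_min_at_satisfying : perm_min_at e s i \in satisfying_perms e.
Proof.
apply: key_perm_satisfying => u v e_uv; apply: contra => c_iu.
exact: connect_trans c_iu (connect1 e_uv).
Qed.

Lemma perm_max_at_satisfying : perm_max_at e s i \in satisfying_perms e.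
Proof.
apply: key_perm_satisfying => u v e_uv c_vi.
exact: connect_trans (connect1 e_uv) c_vi.
Qed.

Lemma perm_min_atE : perm_min_at e s i i = #|reach e i| :> nat.
Proof.
rewrite rank_permE /rank; apply: eq_card => w; rewrite !inE ltn_key connect0 /=.
have := subsetP (reach_sub_perm_lt i sP) w; rewrite !inE.
case: (connect e i w); rewrite /= ?andbT ?andbF // => lt_wi.
by apply/idP/idP => [|/lt_wi //]; apply: contraTneq => ->; rewrite ltnn.
Qed.

Lemma perm_max_atE : perm_max_at e s i i = n - #|reach_inv e i| - 1 :> nat.
Proof.
rewrite rank_permE /rank -card_compl_reach_inv; apply: eq_card => w.
rewrite !inE ltn_key connect0.
case c_wi: (connect e w i) => /=.
  by rewrite andbT orbN ltnNge (connect_satisfying_leq sP c_wi).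
rewrite andbF orbF; apply/esym/(contraFneq _ c_wi) => ->; exact: connect0.
Qed.

End ExtremalExtensions.

Theorem mainTheorem5 (n : nat) (e : rel 'I_n) :
  oriented_graph e ->
  2 <= #|satisfying_perms e| ->
  exists s r : 'S_n,
    [/\ s \in satisfying_perms e, r \in satisfying_perms e &
        d_ell s r = \max_(i : 'I_n) (n - #|reach e i| - #|reach_inv e i| - 1)].
Proof.
(* Only the nonemptiness of P(G) is needed. *)
move=> _ /ltnW /card_gt0P [s sP].
case: n e s sP => [|n] e s sP; first by exists s, s; rewrite /d_ell !big_ord0.
have [|i max_at_i] := @eq_bigmax _ (fun i => n.+1 - #|reach e i| - #|reach_inv e i| - 1).
  by rewrite card_ord.
have [sigmaP rhoP] := (perm_min_at_satisfying sP i, perm_max_at_satisfying sP i).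
exists (perm_min_at e s i), (perm_max_at e s i); split => //.
apply/eqP; rewrite eqn_leq d_ell_leq_max //= max_at_i.
apply: leq_trans (leq_bigmax i); rewrite (perm_min_atE sP) (perm_max_atE sP).
by set a := #|reach e i|; set b := #|reach_inv e i|; rewrite leq_max; lia.
Qed.
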